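(* Let $n$ be a positive integer, $1\le k\le n$, $w\in\mathfrak S_n$, and let $R$ be a consistent subset of $\mathrm{Inv}_{k+1}(w)$ (i.e. $R\in\mathcal C_w(n,k+1)$). Then the directed graph $G_R$ is acyclic.
   Context: $\mathfrak S_n$ is the symmetric group on $[n]$. $\binom{[n]}{m}$ is the set of $m$-subsets of $[n]$ written $[x_1,\dots,x_m]$ with $x_1<\dots<x_m$; $X_i$ is $X$ with $x_i$ removed; $P(X)=\{X_1,\dots,X_m\}$. A prefix of $P(X)$ is a set $\{X_m,\dots,X_i\}$ and a suffix a set $\{X_i,\dots,X_1\}$ (the empty set counts as both). $\mathrm{Inv}_m(w)=\{[x_1,\dots,x_m]\in\binom{[n]}{m}:w^{-1}(x_1)>\dots>w^{-1}(x_m)\}$. $X\in\binom{[n]}{m}$ is an $m$-quasi-inversion of $w$ if exactly one pair $[x_a,x_b]$, $a<b$, is not in $\mathrm{Inv}_2(w)$. The quasi-inversion relations on $\mathrm{Inv}_m(w)$: whenever $X\in\binom{[n]}{m+1}$ is a quasi-inversion with $P(X)\cap\mathrm{Inv}_m(w)=\{X_i,X_{i+1}\}$, $X_i<X_{i+1}$ if $m-i$ is odd and $X_{i+1}<X_i$ if $m-i$ is even; $\mathcal P_w(n,m)$ is $\mathrm{Inv}_m(w)$ with the reflexive-transitive closure of these. $R\subseteq\mathrm{Inv}_{k+1}(w)$ is consistent if it is a lower order ideal of $\mathcal P_w(n,k+1)$ and for every $X\in\mathrm{Inv}_{k+2}(w)$, $P(X)\cap R$ is a prefix or suffix of $P(X)$.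 The directed graph $G_R$ has vertex set $\mathrm{Inv}_k(w)$ and directed edges: $X\to Y$ whenever $X<Y$ is a quasi-inversion relation on $\mathrm{Inv}_k(w)$; $X_i\to X_{i+1}$ for all $1\le i\le k$ whenever $X\in R$; and $X_{i+1}\to X_i$ for all $1\le i\le k$ whenever $X\in\mathrm{Inv}_{k+1}(w)\setminus R$. *)

From mathcomp Require Import all_boot all_order all_fingroup.
From Stdlib Require Import Relations.
Set Implicit Arguments. Unset Strict Implicit. Unset Printing Implicit Defensive.

(* [n] is modelled by 'I_n (0-based, same order); w : 'S_n = {perm 'I_n}.
   For X : {set 'I_n}, enum X lists the elements of X in increasing order,
   so x_i = nth _ (enum X) i.-1 (1-indexed). *)

Section QuasiInv.
Variables (n : nat) (w : 'S_n).

Definition pos (x : 'I_n) : nat := (w^-1)%g x.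

Definition inv_set (m : nat) (X : {set 'I_n}) : bool :=
  (#|X| == m) && sorted (fun a b => pos b < pos a) (enum X).

Definition inv_pair (a b : 'I_n) : bool := pos b < pos a.

Definition quasi_inv (X : {set 'I_n}) : bool :=
  #|[set p : 'I_n * 'I_n | [&& p.1 \in X, p.2 \in X, p.1 < p.2 & ~~ inv_pair p.1 p.2]]| == 1.

(* X_i : X with its i-th smallest element x_i removed (1 <= i <= |X|) *)
Definition del (X : {set 'I_n}) (i : nat) : {set 'I_n} :=
  [set x in X | index x (enum X) != i.-1].

Definition Pset (X : {set 'I_n}) : {set {set 'I_n}} := [set X :\ x | x in X].

Definition qrel (m : nat) (A B : {set 'I_n}) : Prop :=
  exists (X : {set 'I_n}) (i : nat),
    [/\ #|X| = m.+1, quasi_inv X, 1 <= i <= m,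
        [set Y in Pset X | inv_set m Y] = [set del X i; del X i.+1] &
        (if odd (m - i) then A = del X i /\ B = del X i.+1
                        else A = del X i.+1 /\ B = del X i)].

Definition Ple (m : nat) (A B : {set 'I_n}) : Prop :=
  inv_set m A /\ inv_set m B /\ clos_refl_trans _ (qrel m) A B.

Definition is_prefix (X : {set 'I_n}) (S : {set {set 'I_n}}) : Prop :=
  exists i : nat, forall Y, Y \in S <-> exists j, [/\ i <= j, 1 <= j, j <= #|X| & Y = del X j].

Definition is_suffix (X : {set 'I_n}) (S : {set {set 'I_n}}) : Prop :=
  exists i : nat, forall Y, Y \in S <-> exists j, [/\ 1 <= j, j <= i, j <= #|X| & Y = del X j].

Definition lower_ideal (m : nat) (R : {set {set 'I_n}}) : Prop :=
  (forall Y, Y \in R -> inv_set m Y) /\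
  (forall Y Z, Y \in R -> Ple m Z Y -> Z \in R).

Definition consistent (k : nat) (R : {set {set 'I_n}}) : Prop :=
  lower_ideal k.+1 R /\
  (forall X, inv_set k.+2 X -> is_prefix X (Pset X :&: R) \/ is_suffix X (Pset X :&: R)).

Definition GR_edge (k : nat) (R : {set {set 'I_n}}) (A B : {set 'I_n}) : Prop :=
  [/\ inv_set k A, inv_set k B &
   [\/ qrel k A B,
       exists X i, [/\ X \in R, 1 <= i <= k & A = del X i /\ B = del X i.+1] |
       exists X i, [/\ inv_set k.+1 X, X \notin R, 1 <= i <= k &
                       A = del X i.+1 /\ B = del X i]]].

Definition GR_acyclic (k : nat) (R : {set {set 'I_n}}) : Prop :=
  forall A, ~ clos_trans _ (GR_edge k R) A A.

End QuasiInv.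

From Pilot Require Import Defs.
From Stdlib Require Import Relations.
From mathcomp Require Import all_boot all_order all_fingroup zify.
Set Implicit Arguments. Unset Strict Implicit. Unset Printing Implicit Defensive.

(* Relativise everything to a ground set S (inversion sets contained in S, consistency
   tested only inside S) and induct on #|S|.  Let t be the largest element of S and
   give a vertex A the level 1 if t \in A, 2 if t \notin A but t |: A \in R, and 0
   otherwise.  Levels never decrease along an edge, so a directed cycle stays on one
   level.  On levels 0 and 2 it avoids t and lives over S :\ t.  On level 1 every vertex
   contains t, and removing t reverses every edge: the cycle becomes a cycle of the
   graph of dimension one less over the elements that w places after t, for the set
   of those Z with t |: Z \notin R, which is again consistent. *)

Section Deletion.
Variable n : nat.
Implicit Types (X Y : {set 'I_n}) (P Q : {set {set 'I_n}}) (x y t : 'I_n).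

Definition below t X := {in X, forall x, x < t}.

Lemma sorted_enum_set X : sorted (fun x y : 'I_n => x < y) (enum X).
Proof.
rewrite /enum_mem -enumT; apply: sorted_filter; first by move=> ? ? ?; apply: ltn_trans.
by have := iota_ltn_sorted 0 n; rewrite -val_enum_ord sorted_map.
Qed.

Lemma ltn_index_enum X : {in X &, forall x y, (index x (enum X) < index y (enum X)) = (x < y)}.
Proof.
have ltn_tr : transitive (fun x y : 'I_n => x < y) by move=> ? ? ?; apply: ltn_trans.
move=> x y; rewrite -!(mem_enum (mem X)) => Hx Hy.
apply/idP/idP => [|lt_xy]; first exact: (sorted_ltn_index ltn_tr (sorted_enum_set X)).
case: ltngtP => // [lt_yx|/eqP]; last first.
  by rewrite (inj_in_eq (@index_inj _ x _)) // => /eqP eq_xy; rewrite eq_xy ltnn in lt_xy.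
have := sorted_ltn_index ltn_tr (sorted_enum_set X) y x Hy Hx lt_yx.
by rewrite ltnNge ltnW.
Qed.

Lemma del_index X i x : x \in X -> index x (enum X) = i.-1 -> del X i = X :\ x.
Proof.
move=> Hx Hix; apply/setP => y; rewrite !inE -Hix andbC.
case Hy: (y \in X); rewrite ?andbF ?andbT //.
by rewrite (inj_in_eq (@index_inj _ x _)) ?mem_enum.
Qed.

Lemma del_setD1 X i : 0 < i <= #|X| ->
  exists2 x, x \in X & index x (enum X) = i.-1 /\ del X i = X :\ x.
Proof.
case/andP=> i_gt0 le_iX; have [x0 _] : exists x0 : 'I_n, true.
  by case: (pickP (mem X)) => [x0|X0]; [exists x0 | move: le_iX; rewrite (eq_card0 X0); lia].
have lt_i1 : i.-1 < size (enum X) by rewrite -cardE; lia.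
exists (nth x0 (enum X) i.-1); first by rewrite -mem_enum mem_nth.
have idx := index_uniq x0 lt_i1 (enum_uniq (mem X)).
by split => //; apply: del_index; rewrite // -mem_enum mem_nth.
Qed.

Lemma setD1_inj X : {in X &, injective (fun x => X :\ x)}.
Proof.
move=> x y Hx Hy eqXxy; apply/eqP; apply: contraT => ne_xy.
by move/setP/(_ y): eqXxy; rewrite !inE eqxx Hy eq_sym ne_xy.
Qed.

Lemma del_inj X : {in [pred i | 0 < i <= #|X|] &, injective (del X)}.
Proof.
move=> i j Hi Hj; have [x Hx [Hix ->]] := del_setD1 Hi; have [y Hy [Hjy ->]] := del_setD1 Hj.
by move/(setD1_inj Hx Hy) => eq_xy; move: Hi Hj Hix Hjy; rewrite !inE eq_xy; lia.
Qed.

Lemma eq_del X i j : 0 < i <= #|X| -> 0 < j <= #|X| -> (del X i == del X j) = (i == j).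
Proof. by move=> Hi Hj; rewrite (inj_in_eq (@del_inj X)). Qed.

Lemma card_del X i : 0 < i <= #|X| -> #|del X i| = #|X|.-1.
Proof. by case/del_setD1 => x Hx [_ ->]; rewrite (cardsD1 x X) Hx. Qed.

Lemma del_subset X i : del X i \subset X.
Proof. by apply/subsetP => y; rewrite inE => /andP []. Qed.

Lemma mem_Pset X Y : (Y \in Pset X) <-> exists2 j, 0 < j <= #|X| & Y = del X j.
Proof.
split=> [/imsetP [x Hx ->]|[j /del_setD1 [x Hx [_ ->]] ->]]; last exact: imset_f.
exists (index x (enum X)).+1; last by rewrite (del_index Hx).
by rewrite /= cardE index_mem mem_enum.
Qed.

Lemma del_Pset X j : 0 < j <= #|X| -> del X j \in Pset X.
Proof. by move=> Hj; apply/mem_Pset; exists j. Qed.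

Lemma setU_del X i j : 0 < i <= #|X| -> 0 < j <= #|X| -> i != j -> del X i :|: del X j = X.
Proof.
move=> Hi Hj ne_ij; have [x Hx [_ EXi]] := del_setD1 Hi; have [y Hy [_ EXj]] := del_setD1 Hj.
have ne_xy : x != y.
  by apply: contraNneq ne_ij => eq_xy; apply/eqP/(del_inj Hi Hj); rewrite EXi EXj eq_xy.
apply/setP => z; rewrite EXi EXj !inE; case: (z =P x) => [->|_] /=; first by rewrite ne_xy Hx.
by case: (z \in X); rewrite ?andbF.
Qed.

Lemma setU_del_succ X i : 0 < i < #|X| -> del X i :|: del X i.+1 = X.
Proof. by move=> Hi; rewrite setU_del ?ltn_eqF //; lia. Qed.

Lemma enum_setU1_top X t : below t X -> enum (t |: X) = rcons (enum X) t.
Proof.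
move=> Xt; apply: (@irr_sorted_eq _ (fun x y : 'I_n => x < y)).
- by move=> ? ? ?; apply: ltn_trans.
- exact: ltnn.
- exact: sorted_enum_set.
- have sX := sorted_enum_set X.
  have lX y : y \in enum X -> y < t by rewrite mem_enum; apply: Xt.
  by case: (enum X) sX lX => //= x s sX lX; rewrite rcons_path sX lX // mem_last.
- by move=> x; rewrite mem_rcons in_cons !mem_enum in_setU1.
Qed.

Lemma del_adjacent X i : 0 < i < #|X| -> exists xi xj,
  [/\ xi \in X, xj \in X, xi < xj, del X i = X :\ xi & del X i.+1 = X :\ xj].
Proof.
move=> Hi; have [xi Xxi [idx_i Xi]] :
    exists2 x, x \in X & index x (enum X) = i.-1 /\ del X i = X :\ x.
  by apply: del_setD1; lia.
have [xj Xxj [idx_j Xj]] : exists2 x, x \in X & index x (enum X) = i /\ del X i.+1 = X :\ x.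
  by apply: (@del_setD1 X i.+1); lia.
by exists xi, xj; split=> //; rewrite -(ltn_index_enum Xxi Xxj) idx_i idx_j; lia.
Qed.

Lemma notin_below X t : below t X -> t \notin X.
Proof. by move=> Xt; apply/negP => /Xt; rewrite ltnn. Qed.

Lemma card_setU1_below X t : below t X -> #|t |: X| = #|X|.+1.
Proof. by move=> Xt; rewrite cardsU1 notin_below. Qed.

Lemma index_enum_setU1_top X t x : below t X -> x \in X ->
  index x (enum (t |: X)) = index x (enum X).
Proof. by move=> Xt Hx; rewrite enum_setU1_top // -cats1 index_cat mem_enum Hx. Qed.

Lemma del_setU1 X t j : below t X -> 0 < j <= #|X| -> del (t |: X) j = t |: del X j.
Proof.
move=> Xt /del_setD1 [x Hx [Hjx ->]].
rewrite (@del_index _ _ x) ?setU11 ?index_enum_setU1_top ?inE ?Hx ?orbT //.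
apply/setP => y; rewrite !inE; case: (y =P t) => [->|] //=.
by rewrite andbT; apply: contraTneq (Xt _ Hx) => ->; rewrite ltnn.
Qed.

Lemma del_setU1_top X t : below t X -> del (t |: X) #|X|.+1 = X.
Proof.
move=> Xt; rewrite (@del_index _ _ t) ?setU11 ?setU1K ?notin_below //.
rewrite enum_setU1_top // -cats1 index_cat mem_enum (negbTE (notin_below Xt)) /=.
by rewrite eqxx addn0 cardE.
Qed.

Lemma below_setD1_max X t : {in X, forall x, x <= t} -> below t (X :\ t).
Proof. by move=> Xt x; rewrite !inE ltn_neqAle => /andP [ne_xt /Xt ->]; rewrite andbT. Qed.

Lemma del_top X t : t \in X -> {in X, forall x, x <= t} -> del X #|X| = X :\ t.
Proof.
move=> Ht Xt; have Xt' := below_setD1_max Xt.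
by rewrite -{1 2}(setD1K Ht) card_setU1_below // del_setU1_top.
Qed.

Lemma del_setD1_max X t j : t \in X -> {in X, forall x, x <= t} -> 0 < j < #|X| ->
  del X j :\ t = del (X :\ t) j.
Proof.
move=> Ht Xt Hj; have Xt' := below_setD1_max Xt.
rewrite -{1}(setD1K Ht) del_setU1 //; last by move: Hj; rewrite (cardsD1 t X) Ht add1n ltnS.
by apply: setU1K; apply/negP => /(subsetP (del_subset _ j)); rewrite !inE eqxx.
Qed.

Lemma mem_del_top X t j : t \in X -> {in X, forall x, x <= t} -> 0 < j <= #|X| ->
  (t \in del X j) = (j != #|X|).
Proof.
move=> Ht Xt Hj; case: eqP => [->|ne_j]; first by rewrite (del_top Ht Xt) setD11.
have [x Hx [_ EXj]] := del_setD1 Hj; rewrite EXj !inE Ht andbT.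
have HX : 0 < #|X| <= #|X| by case/andP: Hj; lia.
apply/eqP => eq_tx; apply: ne_j; apply: (del_inj Hj HX).
by rewrite EXj (del_top Ht Xt) eq_tx.
Qed.

Lemma subset_del_top X (C : {set 'I_n}) t : t \in X -> {in X, forall x, x <= t} ->
  C \subset X -> t \notin C -> #|X|.-1 <= #|C| -> C = del X #|X|.
Proof.
move=> Ht Xt /subsetP CX tC leXC; rewrite (del_top Ht Xt); apply/eqP; rewrite eqEcard.
have -> : #|X :\ t| <= #|C| by move: leXC; rewrite (cardsD1 t X) Ht.
rewrite andbT; apply/subsetP => x Cx.
by rewrite !inE CX // andbT; apply: contraNneq tC => <-.
Qed.

Definition prefix_or_suffix X P := exists i,
  (forall j, 0 < j <= #|X| -> (del X j \in P) = (i <= j)) \/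
  (forall j, 0 < j <= #|X| -> (del X j \in P) = (j <= i)).

Lemma prefix_or_suffixP X P :
  is_prefix X (Pset X :&: P) \/ is_suffix X (Pset X :&: P) -> prefix_or_suffix X P.
Proof.
have memPI j : 0 < j <= #|X| -> (del X j \in Pset X :&: P) = (del X j \in P).
  by move=> Hj; rewrite inE del_Pset.
have del_eq j j' : 0 < j <= #|X| -> 0 < j' <= #|X| -> del X j = del X j' -> j = j'.
  by move=> Hj Hj'; apply: del_inj.
case=> [] [i HP]; exists i; [left|right] => j Hj; rewrite -memPI //;
  (apply/idP/idP => [/HP [j' [? ? ? /del_eq]] | ?]; last by apply/HP; exists j; case/andP: Hj);
  by move=> -> //; apply/andP.
Qed.

Lemma prefix_or_suffix_between X P a b c : prefix_or_suffix X P ->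
  0 < a <= b -> b <= c <= #|X| -> del X a \in P -> del X c \in P -> del X b \in P.
Proof. by move=> [i [] HP] Hab Hbc; rewrite !HP; lia. Qed.

Lemma prefix_or_suffix_down X P a b c : prefix_or_suffix X P ->
  0 < a <= b -> b <= c <= #|X| -> del X b \in P -> del X c \notin P -> del X a \in P.
Proof. by move=> [i [] HP] Hab Hbc; rewrite !HP; lia. Qed.

Lemma prefix_or_suffix_compl X Y P Q : prefix_or_suffix X P ->
  (forall j, 0 < j <= #|Y| -> (del Y j \in Q) = (del X j \notin P)) -> #|Y| <= #|X| ->
  prefix_or_suffix Y Q.
Proof.
move=> [i [] HP] HQ leYX; [exists i.-1; right | exists i.+1; left] => j Hj;
  rewrite HQ // HP; lia.
Qed.

End Deletion.

Section Inversions.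
Variables (n : nat) (w : 'S_n).
Implicit Types (X Y A B : {set 'I_n}) (a b x y t : 'I_n).

Definition inverted X := {in X &, forall a b, a < b -> pos w b < pos w a}.

Definition precedes t X := {in X, forall x, pos w t < pos w x}.

Lemma pos_inj : injective (pos w).
Proof. by move=> a b /val_inj /perm_inj. Qed.

Lemma inv_setP m X : inv_set w m X <-> #|X| = m /\ inverted X.
Proof.
have pos_tr : transitive (fun a b : 'I_n => pos w b < pos w a).
  by move=> a b c /= H1 H2; apply: ltn_trans H2 H1.
rewrite /inv_set; split=> [/andP [/eqP -> sX]|[-> invX]]; last first.
  rewrite eqxx /=; apply: (@sub_in_sorted _ (mem X) (fun a b : 'I_n => a < b)).
  - by move=> a b Ha Hb; apply: invX.
  - by apply/allP => y; rewrite mem_enum.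
  - exact: sorted_enum_set.
split=> // a b Ha Hb lt_ab; apply: (sorted_ltn_index pos_tr sX); rewrite ?mem_enum //.
by rewrite ltn_index_enum.
Qed.

Lemma inverted_subset X Y : Y \subset X -> inverted X -> inverted Y.
Proof. by move=> /subsetP YX invX a b /YX Ha /YX Hb; apply: invX. Qed.

Lemma inv_set_del m X j : inv_set w m.+1 X -> 0 < j <= #|X| -> inv_set w m (del X j).
Proof.
case/inv_setP => cardX invX Hj; apply/inv_setP; rewrite card_del // cardX.
by split=> //; apply: inverted_subset (del_subset X j) invX.
Qed.

Lemma inv_set_setD1 m X x : inv_set w m.+1 X -> x \in X -> inv_set w m (X :\ x).
Proof.
case/inv_setP => cardX invX Hx; apply/inv_setP.
split; last exact: inverted_subset (subD1set X x) invX.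
by move: cardX; rewrite (cardsD1 x X) Hx => -[].
Qed.

Lemma inverted_setU1 X t : below t X -> precedes t X -> inverted (t |: X) <-> inverted X.
Proof.
move=> Xt tX; split; first by apply: inverted_subset; apply: subsetUr.
move=> invX a b; rewrite !in_setU1.
case/predU1P=> [->|Ha] /predU1P [->|Hb] lt_ab; rewrite ?ltnn // in lt_ab.
- by have := Xt _ Hb; rewrite ltnNge ltnW.
- exact: tX.
- exact: invX.
Qed.

Lemma inv_set_setU1 m X t : below t X -> precedes t X ->
  inv_set w m.+1 (t |: X) = inv_set w m X.
Proof.
move=> Xt tX; apply/idP/idP => /inv_setP [cardX invX]; apply/inv_setP;
  rewrite card_setU1_below // in cardX *; split; try exact/(inverted_setU1 Xt tX).
  by case: cardX.
by rewrite cardX.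
Qed.

Lemma precedes_of_inverted X t : below t X -> inverted (t |: X) -> precedes t X.
Proof. by move=> Xt invX x Hx; apply: invX; rewrite ?setU11 ?setU1r ?Xt. Qed.

Lemma inverted_setD1_pair X a b : a < b -> pos w b < pos w a ->
  inverted (X :\ a) -> inverted (X :\ b) -> inverted X.
Proof.
move=> lt_ab pos_ba invXa invXb x y Hx Hy lt_xy.
have ne_ab : a != b by rewrite neq_ltn lt_ab.
have [xa|xa] := eqVneq x a; last have [ya|ya] := eqVneq y a.
- have [yb|yb] := eqVneq y b; first by rewrite xa yb.
  by apply: (invXb x y); rewrite // !inE ?Hx ?Hy ?yb ?xa ?ne_ab.
- have xb : x != b by rewrite neq_ltn (ltn_trans lt_xy) // ya.
  by apply: (invXb x y); rewrite // !inE ?Hx ?Hy ?xb ?ya ?ne_ab.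
- by apply: (invXa x y); rewrite // !inE ?Hx ?Hy ?xa ?ya.
Qed.

Definition noninversions X :=
  [set p : 'I_n * 'I_n | [&& p.1 \in X, p.2 \in X, p.1 < p.2 & ~~ Defs.inv_pair w p.1 p.2]].

Lemma quasi_invE X : quasi_inv w X = (#|noninversions X| == 1).
Proof. by []. Qed.

Lemma quasi_not_inverted X : quasi_inv w X -> ~ inverted X.
Proof.
rewrite quasi_invE => /cards1P [[a b] EX] invX.
have : (a, b) \in noninversions X by rewrite EX set11.
by rewrite inE /Defs.inv_pair => /and4P [Ha Hb lt_ab]; rewrite invX.
Qed.

Lemma quasi_inv_setU1 X t : below t X -> precedes t X -> quasi_inv w (t |: X) = quasi_inv w X.
Proof.
move=> Xt tX; rewrite !quasi_invE; congr (_ == 1); apply: eq_card => -[a b].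
rewrite !inE /= /Defs.inv_pair.
case: (a =P t) => [->|_]; case: (b =P t) => [->|_]; rewrite /= ?(negbTE (notin_below Xt)) //.
- by rewrite ltnn.
- by case Hb: (b \in X); rewrite //= ltnNge ltnW ?Xt.
- by case Ha: (a \in X); rewrite //= tX ?andbF.
Qed.

Lemma quasi_inv_setU1_swap X x t : inverted X -> below t X -> x \in X ->
  pos w x < pos w t -> precedes t (X :\ x) -> quasi_inv w (t |: X).
Proof.
move=> invX Xt Hx xt tXx; rewrite quasi_invE; apply/cards1P; exists (x, t).
apply/setP => -[a b]; rewrite !inE /= /Defs.inv_pair xpair_eqE.
apply/idP/idP => [/and4P [Ha Hb lt_ab nab]|/andP [/eqP -> /eqP ->]]; last first.
  by rewrite eqxx Hx orbT Xt // -leqNgt ltnW.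
have le_bt : b <= t by case/predU1P: Hb => [->|/Xt /ltnW].
have Xa : a \in X.
  by case/predU1P: Ha => // eq_at; rewrite eq_at ltnNge le_bt in lt_ab.
have /eqP eq_bt : b == t.
  apply: contraT => ne_bt; move: Hb; rewrite (negbTE ne_bt) /= => Xb.
  by rewrite invX in nab.
rewrite eq_bt eqxx andbT; apply: contraTT nab => ne_ax.
by rewrite negbK eq_bt tXx // !inE ne_ax.
Qed.

Lemma below_subset X Y t : Y \subset X -> below t X -> below t Y.
Proof. by move=> /subsetP YX Xt y /YX /Xt. Qed.

Lemma precedes_subset X Y t : Y \subset X -> precedes t X -> precedes t Y.
Proof. by move=> /subsetP YX tX y /YX /tX. Qed.

Lemma inv_set_del_setU1 m X t j : below t X -> precedes t X -> 0 < j <= #|X| ->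
  inv_set w m.+1 (del (t |: X) j) = inv_set w m (del X j).
Proof.
move=> Xt tX Hj; rewrite del_setU1 // inv_set_setU1 //.
  exact: below_subset (del_subset X j) Xt.
exact: precedes_subset (del_subset X j) tX.
Qed.

Lemma inv_Pset_eq2 m X i : 0 < i -> i < #|X| ->
  [set Y in Pset X | inv_set w m Y] = [set del X i; del X i.+1] <->
  (forall j, 0 < j <= #|X| -> inv_set w m (del X j) = (j == i) || (j == i.+1)).
Proof.
move=> i_gt0 lt_iX; have Hi : 0 < i <= #|X| by lia.
have Hi1 : 0 < i.+1 <= #|X| by lia.
split=> [EX j Hj|good].
  by move/setP/(_ (del X j)): EX; rewrite !inE del_Pset //= => ->; rewrite !eq_del.
apply/setP => Y; rewrite !inE; apply/andP/idP => [[/mem_Pset [j Hj ->]]|].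
  by rewrite good // => /orP [] /eqP ->; rewrite eqxx ?orbT.
by case/orP => /eqP ->; rewrite del_Pset // good // eqxx ?orbT.
Qed.

Definition oriented m X i A B :=
  if odd (m - i) then A = del X i /\ B = del X i.+1 else A = del X i.+1 /\ B = del X i.

Definition inv_dels_exactly m X i :=
  forall j, 0 < j <= m.+1 -> inv_set w m (del X j) = (j == i) || (j == i.+1).

Lemma qrelP m A B : qrel w m A B <-> exists X i, [/\ #|X| = m.+1, quasi_inv w X, 0 < i <= m,
  inv_dels_exactly m X i & oriented m X i A B].
Proof.
split=> [] [X [i [cardX qX Hi good orient]]]; exists X, i; split=> //;
  have [i_gt0 lt_iX] : 0 < i /\ i < #|X| by rewrite cardX; lia.
  by rewrite /inv_dels_exactly -cardX; apply/(inv_Pset_eq2 m i_gt0 lt_iX).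
by apply/(inv_Pset_eq2 m i_gt0 lt_iX); rewrite cardX.
Qed.

Lemma oriented_setU m X i A B : #|X| = m.+1 -> 0 < i <= m -> oriented m X i A B -> A :|: B = X.
Proof.
move=> cardX Hi; have lt_iX : 0 < i < #|X| by rewrite cardX; lia.
by rewrite /oriented; case: ifP => _ [-> ->]; rewrite ?(setUC (del X i.+1)) setU_del_succ.
Qed.

Lemma qrel_inv_set m A B : qrel w m A B -> inv_set w m A /\ inv_set w m B.
Proof.
case/qrelP => X [i [_ _ Hi good orient]]; have [Hi0 Hi1] : 0 < i <= m.+1 /\ 0 < i.+1 <= m.+1 by lia.
by move: orient; rewrite /oriented; case: ifP => _ [-> ->]; rewrite !good ?eqxx ?orbT.
Qed.

Lemma setU1_inj t A B : t \notin A -> t \notin B -> t |: A = t |: B -> A = B.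
Proof. by move=> tA tB EAB; rewrite -(setU1K tA) -(setU1K tB) EAB. Qed.

Lemma oriented_setU1 m X i A B t : below t X -> #|X| = m.+1 -> 0 < i <= m ->
  t \notin A -> t \notin B -> oriented m.+1 (t |: X) i (t |: A) (t |: B) <-> oriented m X i B A.
Proof.
move=> Xt cardX Hi tA tB; have tdel j : t \notin del X j.
  by apply: contra (notin_below Xt); apply/subsetP/del_subset.
rewrite /oriented subSn ?oddS; last by case/andP: Hi.
rewrite !del_setU1 ?cardX //; try lia.
case: (odd (m - i)); split=> -[EA EB]; split;
  by [rewrite EA | rewrite EB | apply: (setU1_inj tA (tdel _)) | apply: (setU1_inj tB (tdel _))].
Qed.

Lemma inv_dels_exactly_setU1 m X i t : below t X -> precedes t X -> #|X| = m.+1 -> 0 < i <= m ->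
  quasi_inv w X -> inv_dels_exactly m.+1 (t |: X) i <-> inv_dels_exactly m X i.
Proof.
move=> Xt tX cardX Hi qX; split=> good j Hj.
  by rewrite -(inv_set_del_setU1 _ Xt tX) ?cardX // good //; lia.
case: (ltnP j m.+2) => [lt_jm|le_mj]; first by rewrite inv_set_del_setU1 ?cardX ?good //; lia.
have -> : j = #|X|.+1 by rewrite cardX; lia.
rewrite del_setU1_top //.
have /negbTE -> : ~~ inv_set w m.+1 X by apply/negP => /inv_setP [_]; exact: quasi_not_inverted.
by apply/esym/negbTE; rewrite cardX; lia.
Qed.

Lemma qrel_setU1 m A B t : below t (A :|: B) -> precedes t (A :|: B) ->
  qrel w m.+1 (t |: A) (t |: B) <-> qrel w m B A.
Proof.
set X := A :|: B => Xt tX; have tXn := notin_below Xt.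
have [tA tB] : t \notin A /\ t \notin B by move: tXn; rewrite in_setU negb_or => /andP.
split=> /qrelP [Y [i [cardY qY Hi good orient]]].
  have EY : Y = t |: X.
    by rewrite -(oriented_setU cardY _ orient) 1?setUACA 1?setUid //; lia.
  have cardX : #|X| = m.+1 by move: cardY; rewrite EY card_setU1_below // => -[].
  have le_im : i <= m.
    rewrite leqNgt; apply/negP => lt_mi; have Ei : i = m.+1 by lia.
    move: orient; rewrite /oriented Ei subnn /= EY -cardX del_setU1_top // => -[EA _].
    by move/setP/(_ t): EA; rewrite setU11 (negbTE tXn).
  rewrite EY quasi_inv_setU1 // in qY good orient; have Hi' : 0 < i <= m by lia.
  apply/qrelP; exists X, i; split=> //; first exact/(inv_dels_exactly_setU1 Xt).
  exact/(oriented_setU1 Xt cardX Hi' tA tB).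
have EY : Y = X by rewrite -(oriented_setU cardY Hi orient) setUC.
rewrite EY in cardY qY good orient.
apply/qrelP; exists (t |: X), i; split; rewrite ?card_setU1_below ?cardY ?quasi_inv_setU1 //.
- lia.
- exact/inv_dels_exactly_setU1.
- exact/(oriented_setU1 Xt cardY Hi tA tB).
Qed.

Lemma qrel_swap_top m X x t : #|X| = m.+1 -> inverted X -> x \in X -> {in X, forall y, y <= x} ->
  below t X -> pos w x < pos w t -> precedes t (X :\ x) -> qrel w m.+1 X (t |: (X :\ x)).
Proof.
move=> cardX invX Hx Xx Xt xt tXx.
have Xxt : below t (X :\ x) := below_subset (subD1set X x) Xt.
have delX : del X m.+1 = X :\ x by rewrite -cardX (del_top Hx Xx).
apply/qrelP; exists (t |: X), m.+1; split.
- by rewrite card_setU1_below // cardX.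
- exact: quasi_inv_setU1_swap tXx.
- by rewrite leqnn.
- move=> j Hj; case: (ltngtP j m.+1) => [lt_jm|lt_mj|->]; last first.
  + rewrite del_setU1 ?cardX ?leqnn // delX inv_set_setU1 // -delX /=.
    by apply: inv_set_del; rewrite ?cardX ?leqnn //; apply/inv_setP.
  + have -> : j = #|X|.+1 by rewrite cardX; lia.
    by rewrite del_setU1_top // cardX ?eqxx ?orbT; apply/inv_setP.
  rewrite del_setU1 ?cardX //; last by lia.
  have xdel : x \in del X j by rewrite (mem_del_top Hx Xx) cardX; lia.
  have -> : (j == m.+2) = false by lia.
  apply/negP => /inv_setP [_ invD].
  by have := invD x t (setU1r _ xdel) (setU11 _ _) (Xt _ Hx); rewrite ltnNge ltnW.
- rewrite /oriented subnn /=; split; last by rewrite del_setU1 ?cardX ?leqnn // delX.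
  by rewrite -cardX del_setU1_top.
Qed.

Lemma precedes_setD1 X x t : precedes t (X :\ x) -> pos w t < pos w x -> precedes t X.
Proof.
by move=> tXx tx y Hy; case: (y =P x) => [->|/eqP ne_yx] //; apply: tXx; rewrite !inE ne_yx.
Qed.

Lemma precedes_qrel m X i A B t : #|X| = m.+1 -> quasi_inv w X -> 0 < i <= m ->
  inverted A -> inverted B -> oriented m X i A B -> precedes t A -> precedes t X.
Proof.
move=> cardX qX Hi invA invB orient tA.
have lt_iX : 0 < i < #|X| by rewrite cardX; lia.
have [xi [xj [Xxi Xxj lt_ij Xi Xj]]] := del_adjacent lt_iX.
have ne_ij : xi != xj by rewrite neq_ltn lt_ij.
move: orient; rewrite /oriented Xi Xj; case: ifP => odd_mi [EA EB]; subst A B.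
  have lt_im : i < m.
    rewrite ltn_neqAle andbC; case/andP: Hi => _ -> /=.
    by apply: contraTneq odd_mi => ->; rewrite subnn.
  have lt_i1X : 0 < i.+1 < #|X| by rewrite cardX; lia.
  have [xj' [y [Xxj' Xy lt_jy Xj' _]]] := del_adjacent lt_i1X.
  rewrite Xj in Xj'; rewrite -(setD1_inj Xxj Xxj' Xj') in lt_jy.
  have [ne_yi ne_yj] : y != xi /\ y != xj by rewrite !neq_ltn lt_jy (ltn_trans lt_ij lt_jy) !orbT.
  apply: (precedes_setD1 tA); apply: (@ltn_trans (pos w y)); first by apply: tA; rewrite !inE ne_yi.
  by apply: invB; rewrite ?inE ?ne_yj ?ne_ij ?Xy ?Xxi ?(ltn_trans lt_ij lt_jy).
have lt_pos : pos w xi < pos w xj.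
  case: (ltngtP (pos w xi) (pos w xj)) => // [lt_ji|/pos_inj eq_ij].
    by case: (quasi_not_inverted qX); apply: inverted_setD1_pair lt_ij lt_ji invB invA.
  by rewrite eq_ij eqxx in ne_ij.
by apply: (precedes_setD1 tA); apply: ltn_trans lt_pos; apply: tA; rewrite !inE ne_ij.
Qed.

End Inversions.

Section Potential.
Variables (n : nat) (w : 'S_n).
Implicit Types (S X Y A B C : {set 'I_n}) (R : {set {set 'I_n}}) (x y t : 'I_n).

Definition consistent_on S k R := [/\
  {in R, forall Y, inv_set w k.+1 Y},
  forall Y Z, Y \in R -> qrel w k.+1 Z Y -> Z :|: Y \subset S -> Z \in R &
  forall X, inv_set w k.+2 X -> X \subset S -> prefix_or_suffix X R].

Definition GR_edge_on S k R A B := [/\ GR_edge w k R A B, A \subset S & B \subset S].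

Lemma GR_edge_top k R A B : {in R, forall Y, inv_set w k.+1 Y} -> GR_edge w k R A B ->
  exists2 X : {set 'I_n}, #|X| = k.+1 /\ A :|: B = X &
    (B = del X k.+1 -> X \in R) /\ (A = del X k.+1 -> X \notin R).
Proof.
move=> R_inv [_ _ [qAB | [X [i [XR Hi [EA EB]]]] | [X [i [invX XR Hi [EA EB]]]]]].
- have /qrelP [X [i [cardX qX Hi _ orient]]] := qAB.
  exists X; first by split=> //; apply: oriented_setU orient.
  split=> [EB|_]; last by apply/negP => /R_inv /inv_setP [_]; apply: quasi_not_inverted.
  move: orient; rewrite /oriented EB; case: ifP => odd_ki [_ /eqP].
    by rewrite eq_del ?cardX; [move/eqP=> [eq_ki]; rewrite eq_ki subnn in odd_ki | lia..].
  by rewrite eq_del ?cardX; lia.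
- have /inv_setP [cardX _] := R_inv X XR.
  exists X; first by rewrite EA EB setU_del ?cardX //; lia.
  by split=> // /eqP; rewrite EA eq_del ?cardX; lia.
- have /inv_setP [cardX _] := invX.
  exists X; first by rewrite EA EB setU_del ?cardX //; lia.
  by split=> // /eqP; rewrite EB eq_del ?cardX; lia.
Qed.

Section TopElement.
Variables (S : {set 'I_n}) (t : 'I_n) (k : nat) (R : {set {set 'I_n}}).
Hypotheses (tS : t \in S) (St : {in S, forall x, x <= t}).
Hypotheses (R_inv : {in R, forall Y, inv_set w k.+1 Y})
  (R_lower : forall Y Z, Y \in R -> qrel w k.+1 Z Y -> Z :|: Y \subset S -> Z \in R)
  (R_cut : forall X, inv_set w k.+2 X -> X \subset S -> prefix_or_suffix X R).

Lemma below_top C : C \subset S -> t \notin C -> below t C.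
Proof.
move=> /subsetP CS tC x Cx; rewrite ltn_neqAle St ?CS // andbT.
by apply: contraNneq tC => /val_inj <-.
Qed.

Lemma setU1_edge_top A B : GR_edge_on S k R A B -> t \in A :|: B ->
  (t \notin B -> t |: B \in R) /\ (t \notin A -> t |: A \notin R).
Proof.
case=> e AS BS tAB; have [X [cardX EX] [upR downR]] := GR_edge_top R_inv e.
have XS : X \subset S by rewrite -EX subUset AS BS.
have tX : t \in X by rewrite -EX.
have Xt : {in X, forall x, x <= t} by move=> x /(subsetP XS) /St.
case: e => /inv_setP [cardA _] /inv_setP [cardB _] _.
have topE C : C \subset X -> #|C| = k -> t \notin C -> t |: C = X /\ C = del X k.+1.
  move=> CX cardC tC; have EC : C = del X k.+1.
    by rewrite -cardX; apply: (subset_del_top tX Xt); rewrite ?cardX ?cardC.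
  by split=> //; rewrite EC -cardX (del_top tX Xt) setD1K.
split=> [tB|tA].
  have BX : B \subset X by rewrite -EX subsetUr.
  by have [-> /upR] := topE B BX cardB tB.
have AX : A \subset X by rewrite -EX subsetUl.
by have [-> /downR] := topE A AX cardA tA.
Qed.

Lemma precedes_of_setU1_R A : A \subset S -> t \notin A -> t |: A \in R -> precedes w t A.
Proof. by move=> AS tA /R_inv /inv_setP [_]; apply: precedes_of_inverted; apply: below_top. Qed.

Lemma setU1_R_qrel A B : A \subset S -> B \subset S -> t \notin A -> t \notin B ->
  inv_set w k A -> inv_set w k B -> qrel w k A B -> t |: A \in R -> t |: B \in R.
Proof.
move=> AS BS tA tB /inv_setP [_ invA] /inv_setP [_ invB] qAB AR.
have /qrelP [X [i [cardX qX Hi _ orient]]] := qAB.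
have EX : B :|: A = X by rewrite setUC; apply: oriented_setU orient.
have Xt : below t X.
  by rewrite -EX; apply: below_top; rewrite ?subUset ?AS ?BS // in_setU negb_or tA tB.
have tX : precedes w t X.
  exact: precedes_qrel cardX qX Hi invA invB orient (precedes_of_setU1_R AS tA AR).
have qBA : qrel w k.+1 (t |: B) (t |: A) by apply/qrel_setU1; rewrite ?EX.
by apply: R_lower AR qBA _; rewrite !subUset !sub1set tS AS BS.
Qed.

Lemma cut_setU1 X : inv_set w k.+1 X -> X \subset S -> t \notin X -> precedes w t X ->
  prefix_or_suffix (t |: X) R.
Proof.
move=> invX XS tX tXp; have Xt := below_top XS tX.
by apply: R_cut; rewrite ?inv_set_setU1 // subUset sub1set tS XS.
Qed.

Lemma setU1_R_up X i A B : X \in R -> 0 < i <= k -> A = del X i -> B = del X i.+1 ->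
  A \subset S -> B \subset S -> t \notin A -> t \notin B -> t |: A \in R -> t |: B \in R.
Proof.
move=> XR Hi; have /inv_setP [cardX invX] := R_inv XR.
have [lt_iX le_iX le_i1X le_ii1 le_i1top] : [/\ 0 < i < #|X|, 0 < i <= #|X|, 0 < i.+1 <= #|X|,
  0 < i <= i.+1 & i.+1 <= #|X|.+1 <= #|X|.+1] by rewrite cardX; split; lia.
move=> EA EB AS BS tA tB AR.
have [xi [xj [Xxi Xxj lt_ij Xi Xj]]] := del_adjacent lt_iX.
have EX : A :|: B = X by rewrite EA EB setU_del_succ.
have XS : X \subset S by rewrite -EX subUset AS BS.
have tX : t \notin X by rewrite -EX in_setU negb_or tA tB.
have Xt := below_top XS tX.
have tXp : precedes w t X.
  apply: (precedes_setD1 (x := xi)); first by rewrite -Xi -EA; apply: precedes_of_setU1_R.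
  apply: ltn_trans (invX _ _ Xxi Xxj lt_ij); apply: (precedes_of_setU1_R AS tA AR).
  by rewrite EA Xi !inE Xxj andbT neq_ltn lt_ij orbT.
have cut := cut_setU1 (R_inv XR) XS tX tXp.
rewrite EB -del_setU1 //.
apply: (prefix_or_suffix_between (c := #|X|.+1) cut le_ii1); first by rewrite card_setU1_below.
  by rewrite del_setU1 -?EA.
by rewrite del_setU1_top.
Qed.

Lemma setU1_R_down X i A B : inv_set w k.+1 X -> X \notin R -> 0 < i <= k ->
  A = del X i.+1 -> B = del X i ->
  A \subset S -> B \subset S -> t \notin A -> t \notin B -> t |: A \in R -> t |: B \in R.
Proof.
move=> invX' XR Hi; have /inv_setP [cardX invX] := invX'.
have [lt_iX le_iX le_i1X le_ii1 le_i1top] : [/\ 0 < i < #|X|, 0 < i <= #|X|, 0 < i.+1 <= #|X|,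
  0 < i <= i.+1 & i.+1 <= #|X|.+1 <= #|X|.+1] by rewrite cardX; split; lia.
move=> EA EB AS BS tA tB AR.
have [xi [xj [Xxi Xxj lt_ij Xi Xj]]] := del_adjacent lt_iX.
have EX : A :|: B = X by rewrite EA EB setUC setU_del_succ.
have XS : X \subset S by rewrite -EX subUset AS BS.
have tX : t \notin X by rewrite -EX in_setU negb_or tA tB.
have Xt := below_top XS tX.
have tXj : precedes w t (X :\ xj) by rewrite -Xj -EA; apply: precedes_of_setU1_R.
case: (ltngtP (pos w t) (pos w xj)) => [lt_tj|lt_jt|/pos_inj eq_tj];
  last by rewrite eq_tj Xxj in tX.
  have cut := cut_setU1 invX' XS tX (precedes_setD1 tXj lt_tj).
  rewrite EB -del_setU1 //.
  apply: (prefix_or_suffix_down (b := i.+1) (c := #|X|.+1) cut le_ii1).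
    by rewrite card_setU1_below.
    by rewrite del_setU1 -?EA.
  by rewrite del_setU1_top.
have Xmax : {in X, forall y, y <= xj}.
  move=> y Xy; rewrite leqNgt; apply/negP => lt_jy.
  have tY : pos w t < pos w y by apply: tXj; rewrite !inE Xy andbT neq_ltn lt_jy orbT.
  by have := ltn_trans (ltn_trans tY (invX _ _ Xxj Xy lt_jy)) lt_jt; rewrite ltnn.
have qXA := qrel_swap_top cardX invX Xxj Xmax Xt lt_jt tXj.
rewrite -Xj -EA in qXA; case/negP: XR; apply: R_lower AR qXA _.
by rewrite subUset XS subUset sub1set tS AS.
Qed.

Lemma setU1_edge_R A B : GR_edge_on S k R A B -> t \notin A -> t \notin B ->
  t |: A \in R -> t |: B \in R.
Proof.
case=> [[invA invB e] AS BS] tA tB.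
case: e => [qAB | [X [i [XR Hi [EA EB]]]] | [X [i [invX XR Hi [EA EB]]]]].
- exact: setU1_R_qrel.
- exact: setU1_R_up XR Hi EA EB AS BS tA tB.
- exact: setU1_R_down invX XR Hi EA EB AS BS tA tB.
Qed.

Definition level A := if t \in A then 1 else if t |: A \in R then 2 else 0.

Lemma level_eq1 A : (level A == 1) = (t \in A).
Proof. by rewrite /level; case: (t \in A); case: (t |: A \in R). Qed.

Lemma level_mono A B : GR_edge_on S k R A B -> level A <= level B.
Proof.
move=> e; have top := setU1_edge_top e.
rewrite /level; case tA: (t \in A); case tB: (t \in B) => //.
- by rewrite ((top _).1 (negbT tB)) // in_setU tA.
- by rewrite (negbTE ((top _).2 (negbT tA))) // in_setU tB orbT.
- by case: ifP => // AR; rewrite (setU1_edge_R e) ?tA ?tB.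
Qed.
End TopElement.
End Potential.

Section Contraction.
Variables (n : nat) (w : 'S_n) (S : {set 'I_n}) (t : 'I_n) (k : nat) (R : {set {set 'I_n}}).
Implicit Types (X Y Z A B : {set 'I_n}) (x : 'I_n).
Hypotheses (tS : t \in S) (St : {in S, forall x, x <= t}).
Hypotheses (R_inv : {in R, forall Y, inv_set w k.+2 Y})
  (R_lower : forall Y Z, Y \in R -> qrel w k.+2 Z Y -> Z :|: Y \subset S -> Z \in R)
  (R_cut : forall X, inv_set w k.+3 X -> X \subset S -> prefix_or_suffix X R).

Definition after_top := [set x in S | pos w t < pos w x].

Definition contract_R :=
  [set Z : {set 'I_n} | [&& Z \subset after_top, inv_set w k.+1 Z & t |: Z \notin R]].

Lemma card_after_top : #|after_top| < #|S|.
Proof.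
apply: proper_card; apply/properP; split; first by apply/subsetP => x; rewrite inE => /andP [].
by exists t; rewrite // inE ltnn andbF.
Qed.

Lemma below_after_top Z : Z \subset after_top -> below t Z.
Proof.
move=> /subsetP Zt x /Zt; rewrite inE => /andP [Sx tx]; rewrite ltn_neqAle St // andbT.
by apply: contraTneq tx => /val_inj ->; rewrite ltnn.
Qed.

Lemma precedes_after_top Z : Z \subset after_top -> precedes w t Z.
Proof. by move=> /subsetP Zt x /Zt; rewrite inE => /andP []. Qed.

Lemma setU1_after_top Z : Z \subset after_top -> t |: Z \subset S.
Proof.
move=> Zt; rewrite subUset sub1set tS; apply: subset_trans Zt _.
by apply/subsetP => x; rewrite inE => /andP [].
Qed.

Lemma consistent_on_contract : consistent_on w after_top k contract_R.
Proof.
split.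
- by move=> Y; rewrite inE => /and3P [].
- move=> Y Z; rewrite !inE => /and3P [Yt invY YR] qZY; rewrite subUset => /andP [Zt _].
  rewrite Zt (qrel_inv_set qZY).1 /=; apply: contra YR => ZR.
  have YZt : Y :|: Z \subset after_top by rewrite subUset Yt Zt.
  apply: R_lower ZR _ _.
    exact/(qrel_setU1 _ (below_after_top YZt) (precedes_after_top YZt)).
  by rewrite subUset !setU1_after_top.
- move=> Z invZ Zt; have Zt' := below_after_top Zt; have tZ := precedes_after_top Zt.
  have cut : prefix_or_suffix (t |: Z) R.
    by apply: R_cut; rewrite ?inv_set_setU1 ?setU1_after_top.
  apply: (prefix_or_suffix_compl cut); last by rewrite card_setU1_below.
  move=> j Hj; rewrite inE (inv_set_del invZ Hj) (subset_trans (del_subset Z j) Zt) del_setU1 //.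
Qed.

Lemma setD1_top_after A : A \subset S -> inverted w A -> t \in A -> A :\ t \subset after_top.
Proof.
move=> /subsetP AS invA tA; apply/subsetP => x; rewrite !inE => /andP [xt Ax].
rewrite AS //=; apply: invA; rewrite // ltn_neqAle St ?AS // andbT.
by apply: contra xt => /eqP /val_inj ->.
Qed.

Lemma contract_adjacent X i : inv_set w k.+2 X -> 0 < i <= k.+1 ->
  del X i \subset S -> del X i.+1 \subset S -> t \in del X i -> t \in del X i.+1 ->
  [/\ 0 < i <= k, inv_set w k.+1 (X :\ t), X :\ t \subset after_top,
      del X i :\ t = del (X :\ t) i & del X i.+1 :\ t = del (X :\ t) i.+1].
Proof.
move=> invX Hi; have /inv_setP [cardX invX'] := invX.
have [lt_iX le_i1X] : 0 < i < #|X| /\ 0 < i.+1 <= #|X| by rewrite cardX; lia.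
move=> XiS Xi1S tXi tXi1.
have XS : X \subset S by rewrite -(setU_del_succ lt_iX) subUset XiS Xi1S.
have tX : t \in X := subsetP (del_subset X i) t tXi.
have Xmax : {in X, forall x, x <= t} by move=> x /(subsetP XS) /St.
have le_ik : i <= k.
  move: tXi1; rewrite mem_del_top // cardX eqSS => ne_ik.
  by rewrite -ltnS ltn_neqAle ne_ik; case/andP: Hi.
have le_i1 : 0 < i.+1 < #|X| by rewrite cardX !ltnS le_ik.
split; rewrite ?del_setD1_max ?inv_set_setD1 ?setD1_top_after //.
by case/andP: Hi => ->.
Qed.

Lemma GR_edge_contract A B : GR_edge_on w S k.+1 R A B -> t \in A -> t \in B ->
  GR_edge_on w after_top k contract_R (B :\ t) (A :\ t).
Proof.
case=> [[invA invB e] AS BS] tA tB.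
have /inv_setP [_ invA'] := invA; have /inv_setP [_ invB'] := invB.
have At := setD1_top_after AS invA' tA; have Bt := setD1_top_after BS invB' tB.
split=> //; split; rewrite ?inv_set_setD1 //.
case: e => [qAB | [X [i [XR Hi [EA EB]]]] | [X [i [invX XR Hi [EA EB]]]]].
- have ABt : (A :\ t) :|: (B :\ t) \subset after_top by rewrite subUset At Bt.
  constructor 1; apply/(qrel_setU1 _ (below_after_top ABt) (precedes_after_top ABt)).
  by rewrite !setD1K.
- rewrite EA EB in AS BS tA tB *.
  have [Hi' invXt Xt EXi EXi1] := contract_adjacent (R_inv XR) Hi AS BS tA tB.
  constructor 3; exists (X :\ t), i; split; rewrite ?EXi ?EXi1 //.
  by rewrite inE setD1K ?XR ?andbF // (subsetP (del_subset X i) t).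
- rewrite EA EB in AS BS tA tB *.
  have [Hi' invXt Xt EXi EXi1] := contract_adjacent invX Hi BS AS tB tA.
  constructor 2; exists (X :\ t), i; split; rewrite ?EXi ?EXi1 //.
  by rewrite inE Xt invXt setD1K // (subsetP (del_subset X i) t).
Qed.
End Contraction.

Section ClosTrans.
Variable T : Type.
Implicit Types (e : relation T) (x y : T).

Lemma clos_trans_map e1 e2 (f : T -> T) x y : (forall a b, e1 a b -> e2 (f a) (f b)) ->
  clos_trans T e1 x y -> clos_trans T e2 (f x) (f y).
Proof.
by move=> e12; elim=> [a b /e12 | a b c _ ab _ bc]; [apply: t_step | apply: t_trans ab bc].
Qed.

Lemma clos_trans_rev_map e1 e2 (f : T -> T) x y : (forall a b, e1 a b -> e2 (f b) (f a)) ->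
  clos_trans T e1 x y -> clos_trans T e2 (f y) (f x).
Proof.
by move=> e12; elim=> [a b /e12 | a b c _ ab _ bc]; [apply: t_step | apply: t_trans bc ab].
Qed.

Lemma clos_trans_mono e (ph : T -> nat) x y : (forall a b, e a b -> ph a <= ph b) ->
  clos_trans T e x y -> ph x <= ph y.
Proof. by move=> mono; elim=> [a b /mono | a b c _ ab _ bc] //; apply: leq_trans ab bc. Qed.

Lemma clos_trans_level e (ph : T -> nat) p x y : (forall a b, e a b -> ph a <= ph b) ->
  clos_trans T e x y -> ph x = p -> ph y = p ->
  clos_trans T (fun a b => [/\ e a b, ph a = p & ph b = p]) x y.
Proof.
move=> mono; elim=> [a b ab pa pb | a b c ab IHab bc IHbc pa pc]; first exact: t_step.
have pb : ph b = p.
  by apply/eqP; rewrite eqn_leq -{1}pc -pa !(clos_trans_mono mono) //.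
exact: t_trans (IHab pa pb) (IHbc pb pc).
Qed.

Lemma clos_trans_first e x y : clos_trans T e x y -> exists z, e x z.
Proof. by elim=> [a b ab | a b c _ [z az] _ _]; [exists b | exists z]. Qed.

End ClosTrans.

Section Acyclicity.
Variables (n : nat) (w : 'S_n).
Implicit Types (S A B : {set 'I_n}) (R : {set {set 'I_n}}) (x : 'I_n).

Lemma consistent_on_subset S S' k R : S' \subset S ->
  consistent_on w S k R -> consistent_on w S' k R.
Proof.
move=> S'S [R_inv R_lower R_cut]; split=> // [Y Z YR qZY ZYS' | X invX XS'].
  exact: R_lower YR qZY (subset_trans ZYS' S'S).
exact: R_cut invX (subset_trans XS' S'S).
Qed.

Lemma GR_edge_on0 S R A B : ~ GR_edge_on w S 0 R A B.
Proof.
by case=> [[_ _ [[X [i [_ _ Hi _ _]]] | [X [i [_ Hi _]]] | [X [i [_ _ Hi _]]]]] _ _]; lia.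
Qed.

Lemma acyclic_on S k R : consistent_on w S k R ->
  forall A, ~ clos_trans _ (GR_edge_on w S k R) A A.
Proof.
elim: {S}_.+1 {-2}S (ltnSn #|S|) k R => // N IH S leSN k R consR A cycle.
have [B e] := clos_trans_first cycle.
case: k R consR cycle e => [|k] R consR cycle e; first exact: GR_edge_on0 e.
case: (consR) => R_inv R_lower R_cut.
have [a Aa] : exists a, a \in A.
  by case: e => [[/inv_setP [cardA _] _ _] _ _]; apply/set0Pn; rewrite -card_gt0 cardA.
have [t tS St] : exists2 t, t \in S & {in S, forall x, x <= t}.
  by case: e => [_ /subsetP AS _]; case: (arg_maxnP val (AS a Aa)) => t tS St; exists t.
have mono := level_mono tS St R_inv R_lower R_cut.
have [top|not_top] := eqVneq (level t R A) 1.
  set R' := contract_R w S t k R.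
  have cycle' : clos_trans _ (GR_edge_on w (after_top w S t) k R') (A :\ t) (A :\ t).
    apply: (clos_trans_rev_map (f := fun C => C :\ t)) (clos_trans_level mono cycle top top).
    move=> C D [CD lC lD].
    by apply: (GR_edge_contract tS St R_inv CD); rewrite -(level_eq1 t R) ?lC ?lD.
  apply: IH cycle'; last exact: consistent_on_contract.
  exact: leq_trans (card_after_top w tS) leSN.
have cycle' : clos_trans _ (GR_edge_on w (S :\ t) k.+1 R) A A.
  apply: (clos_trans_map (f := id)) (clos_trans_level mono cycle (erefl _) (erefl _)) => C D.
  case=> [[CD CS DS] lC lD]; split; rewrite // subsetD1 ?CS ?DS -(level_eq1 t R) ?lC ?lD //.
apply: IH cycle'; last exact: consistent_on_subset (subD1set S t) consR.
by move: leSN; rewrite (cardsD1 t S) tS.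
Qed.

End Acyclicity.

Theorem lemma3p11 (n : nat) (k : nat) (w : 'S_n) (R : {set {set 'I_n}}) :
  0 < n -> 1 <= k <= n -> consistent w k R -> GR_acyclic w k R.
Proof.
move=> _ _ [[R_inv R_lower] R_cut] A cycle.
have consR : consistent_on w [set: 'I_n] k R.
  split=> // [Y Z YR qZY _ | X invX _]; last exact/prefix_or_suffixP/R_cut.
  by apply: R_lower YR _; have [invZ invY] := qrel_inv_set qZY; do 2?split; last exact: rt_step.
apply: (acyclic_on consR (A := A)); apply: (clos_trans_map (f := id)) cycle => B C e.
by split; rewrite ?subsetT.
Qed.
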